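(* Consider problem (P): minimize $g(x)$ subject to $q(x)\in\Theta$, under the standing assumptions below, and let $\bar x$ be a local minimizer of (P) at which MSCQ holds. Then for each $w\in\overline K$ and each $z\in\mathbb{R}^n$ with $$\nabla Q(\bar x)z+\langle w,\nabla^2Q(\bar x)w\rangle\in T^2_C\big(Q(\bar x),\nabla Q(\bar x)w\big),$$ one has $\nabla g(\bar x)z+\langle w,\nabla^2 g(\bar x)w\rangle\ge0$.
   Context: Standing assumptions: $g:\mathbb{R}^n\to\mathbb{R}$ and $q:\mathbb{R}^n\to\mathbb{R}^m$ are $C^2$; $\Theta\subset\mathbb{R}^m$ is nonempty closed convex; $\Gamma=\{x\mid q(x)\in\Theta\}$; $\bar x\in\Gamma$, $\bar y=q(\bar x)$. $\Theta$ is $C^2$-cone reducible at $\bar y$ to a pointed closed convex cone $C\subset\mathbb{R}^l$: there are a neighborhood $V$ of $\bar y$ and a $C^2$ map $h:V\to\mathbb{R}^l$ with $h(\bar y)=0$, $\nabla h(\bar y)$ surjective, and $\Theta\cap V=\{y\in V\mid h(y)\in C\}$. $Q:=h\circ q$ on $q^{-1}(V)$, and $\langle w,\nabla^2Q(\bar x)w\rangle$ denotes the vector $(w^T\nabla^2Q_j(\bar x)w)_{j=1}^l$. MSCQ (metric subregularity constraint qualification) at $\bar x$: there exist $\kappa>0$ and a neighborhood $U$ of $\bar x$ with $d(x;\Gamma)\le\kappa\,d(q(x);\Theta)$ for all $x\in U$. The critical cone is $\overline K=T_\Gamma(\bar x)\cap\{\nabla g(\bar x)\}^\perp$ with $T_\Gamma$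 the contingent cone. The outer second-order tangent set is $T^2_C(y,d)=\{v\mid \exists t_k\downarrow0:\ d(y+t_kd+\tfrac12t_k^2v;C)=o(t_k^2)\}$. *)

From mathcomp Require Import ssreflect ssrfun ssrbool eqtype ssrnat seq choice fintype.
From Stdlib Require Import Reals ClassicalEpsilon.
Open Scope R_scope.

Definition vec (n : nat) := 'I_n -> R.

Definition vsum {n} (f : 'I_n -> R) : R := foldr (fun i acc => f i + acc) 0 (enum 'I_n).
Definition dot {n} (x y : vec n) : R := vsum (fun i => x i * y i).
Definition vnorm {n} (x : vec n) : R := sqrt (dot x x).
Definition vadd {n} (x y : vec n) : vec n := fun i => x i + y i.
Definition vsub {n} (x y : vec n) : vec n := fun i => x i - y i.
Definition vscal {n} (t : R) (x : vec n) : vec n := fun i => t * x i.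
Definition vopp {n} (x : vec n) : vec n := fun i => - x i.

Definition mapply {m n} (A : 'I_m -> vec n) (x : vec n) : vec m := fun i => dot (A i) x.
Definition quad {n} (H : 'I_n -> vec n) (w : vec n) : R := dot w (mapply H w).

Definition is_open {n} (U : vec n -> Prop) : Prop :=
  forall x, U x -> exists eps, 0 < eps /\ forall y, vnorm (vsub y x) < eps -> U y.
Definition nbhd {n} (x : vec n) (U : vec n -> Prop) : Prop :=
  exists eps, 0 < eps /\ forall y, vnorm (vsub y x) < eps -> U y.
Definition is_closed {n} (S : vec n -> Prop) : Prop :=
  forall x, (forall eps, 0 < eps -> exists y, S y /\ vnorm (vsub x y) < eps) -> S x.
Definition is_convex {n} (S : vec n -> Prop) : Prop :=
  forall x y t, 0 <= t <= 1 -> S x -> S y -> S (vadd (vscal t x) (vscal (1 - t) y)).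
Definition is_cone {n} (S : vec n -> Prop) : Prop :=
  forall t x, 0 <= t -> S x -> S (vscal t x).
Definition is_pointed {n} (S : vec n -> Prop) : Prop :=
  forall x, S x -> S (vopp x) -> forall i, x i = 0.

Definition is_inf (E : R -> Prop) (r : R) : Prop :=
  (forall t, E t -> r <= t) /\ (forall s, (forall t, E t -> s <= t) -> s <= r).
Definition setdist {n} (S : vec n -> Prop) (x : vec n) : R :=
  epsilon (inhabits 0) (is_inf (fun t => exists y, S y /\ t = vnorm (vsub x y))).

Definition has_grad {n} (f : vec n -> R) (G : vec n) (x : vec n) : Prop :=
  forall eps, 0 < eps -> exists delta, 0 < delta /\
    forall hh : vec n, vnorm hh < delta ->
      Rabs (f (vadd x hh) - f x - dot G hh) <= eps * vnorm hh.
Definition cont_at {n} (f : vec n -> R) (x : vec n) : Prop :=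
  forall eps, 0 < eps -> exists delta, 0 < delta /\
    forall y, vnorm (vsub y x) < delta -> Rabs (f y - f x) < eps.

Definition C2_scalar_on {n} (U : vec n -> Prop) (f : vec n -> R)
    (Df : vec n -> vec n) (D2f : vec n -> 'I_n -> vec n) : Prop :=
  (forall x, U x -> has_grad f (Df x) x) /\
  (forall x a, U x -> has_grad (fun y => Df y a) (D2f x a) x) /\
  (forall x a b, U x -> cont_at (fun y => D2f y a b) x).

Definition C2_on {n m} (U : vec n -> Prop) (F : vec n -> vec m)
    (DF : vec n -> 'I_m -> vec n) (D2F : vec n -> 'I_m -> 'I_n -> vec n) : Prop :=
  forall i, C2_scalar_on U (fun x => F x i) (fun x => DF x i) (fun x => D2F x i).

Definition vcv {n} (u : nat -> vec n) (d : vec n) : Prop :=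
  Un_cv (fun k => vnorm (vsub (u k) d)) 0.

Definition contingent_cone {n} (S : vec n -> Prop) (x : vec n) (d : vec n) : Prop :=
  exists (t : nat -> R) (dk : nat -> vec n),
    (forall k, 0 < t k) /\ Un_cv t 0 /\ vcv dk d /\
    (forall k, S (vadd x (vscal (t k) (dk k)))).

Definition outer_second_tangent {n} (S : vec n -> Prop) (y d : vec n) (v : vec n) : Prop :=
  exists t : nat -> R,
    (forall k, 0 < t k) /\ Un_cv t 0 /\
    Un_cv (fun k => setdist S (vadd (vadd y (vscal (t k) d)) (vscal (/2 * (t k)^2) v)) / (t k)^2) 0.

From mathcomp Require Import ssreflect ssrfun ssrbool eqtype ssrnat seq choice fintype.
From Stdlib Require Import Reals ClassicalEpsilon Classical Lra Lia FunctionalExtensionality.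
Open Scope R_scope.

(* Write x for xbar and suppose the claim fails: L := g'(x) z + w' g''(x) w < 0.
   Put x_t := x + t w + t^2/2 z.  The argument has three steps.
   1. Taylor-expanding Q = h o q along x_t and using the outer second-order tangent
      property, d(Q(x_t); C) = o(t^2) along a sequence t_k -> 0 ([outer_tangent_small]).
   2. Since h'(q x) is onto, Graves' Newton-type iteration shows that Theta = h^-1(C) is
      metrically regular near q x ([metric_regularity]); combined with MSCQ this gives
      d(x; Gamma) <= K d(Q x; C) near x ([composite_error_bound]), so d(x_t; Gamma) = o(t^2).
   3. Picking feasible points o(t^2)-close to x_t and Taylor-expanding g along them,
      g'(x) w = 0 gives g(x') - g(x) = t^2 L / 2 + o(t^2) < 0, contradicting local
      minimality ([second_order_condition]). *)

Definition lsum {T} (s : seq T) (f : T -> R) : R := foldr (fun i acc => f i + acc) 0 s.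

Section ListSums.
Context {T : Type}.
Implicit Types (s : seq T) (f g : T -> R).

Lemma lsum_add s f g : lsum s (fun i => f i + g i) = lsum s f + lsum s g.
Proof. by elim: s => [|a s IH] /=; [lra | rewrite IH; lra]. Qed.

Lemma lsum_sub s f g : lsum s (fun i => f i - g i) = lsum s f - lsum s g.
Proof. by elim: s => [|a s IH] /=; [lra | rewrite IH; lra]. Qed.

Lemma lsum_scal s c f : lsum s (fun i => c * f i) = c * lsum s f.
Proof. by elim: s => [|a s IH] /=; [lra | rewrite IH; lra]. Qed.

Lemma lsum_scalr s c f : lsum s (fun i => f i * c) = lsum s f * c.
Proof. by elim: s => [|a s IH] /=; [lra | rewrite IH; lra]. Qed.

Lemma lsum_ext s f g : (forall i, f i = g i) -> lsum s f = lsum s g.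
Proof. by move=> H; elim: s => [|a s IH] /=; [lra | rewrite IH H]. Qed.

Lemma lsum_le s f g : (forall i, f i <= g i) -> lsum s f <= lsum s g.
Proof. by move=> H; elim: s => [|a s IH] /=; [lra | have := H a; lra]. Qed.

Lemma lsum_ge0 s f : (forall i, 0 <= f i) -> 0 <= lsum s f.
Proof. by move=> H; elim: s => [|a s IH] /=; [lra | have := H a; lra]. Qed.

Lemma lsum_eq0 s f : (forall i, f i = 0) -> lsum s f = 0.
Proof. by move=> H; elim: s => [|a s IH] /=; [lra | rewrite IH H; lra]. Qed.

Lemma lsum_const s c : lsum s (fun _ => c) = INR (size s) * c.
Proof.
elim: s => [|a s IH]; first by rewrite /=; lra.
change (size (a :: s)) with (size s).+1.
by rewrite [lsum _ _]/= IH S_INR; lra.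
Qed.

Lemma lsum_abs s f : Rabs (lsum s f) <= lsum s (fun i => Rabs (f i)).
Proof.
elim: s => [|a s IH] /=; first by rewrite Rabs_R0; lra.
by have := Rabs_triang (f a) (lsum s f); lra.
Qed.

Lemma lsum_sq_le s f : (forall i, 0 <= f i) ->
  lsum s (fun i => f i * f i) <= lsum s f * lsum s f.
Proof.
move=> H; elim: s => [|a s IH] /=; first lra.
by have := H a; have := lsum_ge0 s f H; nra.
Qed.

End ListSums.

Lemma lsum_swap {T U} (s : seq T) (t : seq U) (F : T -> U -> R) :
  lsum s (fun i => lsum t (F i)) = lsum t (fun j => lsum s (fun i => F i j)).
Proof.
elim: s => [|a s IH] /=; first by symmetry; apply: lsum_eq0 => j; rewrite /lsum /=.
by rewrite IH -lsum_add.
Qed.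

Section EqListSums.
Context {T : eqType}.
Implicit Types (s : seq T) (f : T -> R).

Lemma lsum_mem_le s f i : (forall j, 0 <= f j) -> i \in s -> f i <= lsum s f.
Proof.
move=> H; elim: s => [|a s IH] //=.
rewrite in_cons => /orP [/eqP ->|Hi]; first by have := lsum_ge0 s f H; lra.
by have := IH Hi; have := H a; lra.
Qed.

Lemma lsum_delta_notin s f i : i \notin s ->
  lsum s (fun j => f j * (if j == i then 1 else 0)) = 0.
Proof.
elim: s => [|a s IH] //= Hi.
rewrite in_cons negb_or in Hi; case/andP: Hi => Hai Hi.
by rewrite eq_sym (negbTE Hai) IH //; lra.
Qed.

Lemma lsum_delta s f i : uniq s -> i \in s ->
  lsum s (fun j => f j * (if j == i then 1 else 0)) = f i.
Proof.
elim: s => [|a s IH] //= /andP [Ha Hu].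
rewrite in_cons => /orP [/eqP Hai|Hi].
- by subst a; rewrite eqxx lsum_delta_notin //; lra.
- have -> : (a == i) = false by apply/negbTE; apply: contra Ha => /eqP ->.
  by rewrite IH //; lra.
Qed.
End EqListSums.

Lemma vsum_le_card {n} (f : 'I_n -> R) M : (forall i, f i <= M) -> vsum f <= INR n * M.
Proof.
move=> H; apply: Rle_trans (lsum_le _ _ (fun _ => M) H) _.
by rewrite lsum_const size_enum_ord; lra.
Qed.

(* An error budget [eps] split evenly among [k] coordinates sums to less than [eps]. *)
Lemma card_share_lt k eps : 0 < eps -> INR k * (eps / (INR k + 1)) < eps.
Proof.
move=> He; have Hk := pos_INR k.
apply: (Rmult_lt_reg_r (INR k + 1)); first lra.
by rewrite Rmult_assoc /Rdiv Rmult_assoc Rinv_l; lra.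
Qed.

Lemma lt_div_mul a b X : 0 < X -> a < b / X -> a * X < b.
Proof.
move=> HX H; have := Rmult_lt_compat_r X _ _ HX H.
by have -> : b / X * X = b by field; lra.
Qed.

Lemma div_lt_mul a b X : 0 < X -> a / X < b -> a < b * X.
Proof.
move=> HX H; have := Rmult_lt_compat_r X _ _ HX H.
by have -> : a / X * X = a by field; lra.
Qed.

Lemma card_share_pos k eps : 0 < eps -> 0 < eps / (INR k + 1).
Proof. by move=> He; apply: Rdiv_lt_0_compat => //; have := pos_INR k; lra. Qed.

Section Euclid.
Context {n : nat}.
Implicit Types x y z : vec n.

Lemma dot_sym x y : dot x y = dot y x.
Proof. by apply: lsum_ext => i; lra. Qed.

Lemma dot_addr x y z : dot z (vadd x y) = dot z x + dot z y.
Proof. by rewrite /dot /vsum -lsum_add; apply: lsum_ext => i; rewrite /vadd; lra. Qed.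

Lemma dot_subr x y z : dot z (vsub x y) = dot z x - dot z y.
Proof. by rewrite /dot /vsum -lsum_sub; apply: lsum_ext => i; rewrite /vsub; lra. Qed.

Lemma dot_subl x y z : dot (vsub x y) z = dot x z - dot y z.
Proof. by rewrite /dot /vsum -lsum_sub; apply: lsum_ext => i; rewrite /vsub; lra. Qed.

Lemma dot_scall t x y : dot (vscal t x) y = t * dot x y.
Proof. by rewrite /dot /vsum -lsum_scal; apply: lsum_ext => i; rewrite /vscal; lra. Qed.

Lemma dot_scalr t x y : dot y (vscal t x) = t * dot y x.
Proof. by rewrite /dot /vsum -lsum_scal; apply: lsum_ext => i; rewrite /vscal; lra. Qed.

Lemma dot_self_ge0 x : 0 <= dot x x.
Proof. by apply: lsum_ge0 => i; nra. Qed.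

Lemma vnorm_ge0 x : 0 <= vnorm x.
Proof. exact: sqrt_pos. Qed.

Lemma vnorm_sq x : vnorm x * vnorm x = dot x x.
Proof. by rewrite /vnorm sqrt_sqrt //; apply: dot_self_ge0. Qed.

Lemma coord_le_vnorm x i : Rabs (x i) <= vnorm x.
Proof.
rewrite /vnorm -(sqrt_Rsqr_abs (x i)); apply: sqrt_le_1_alt.
rewrite /Rsqr; apply: (lsum_mem_le _ (fun j => x j * x j)); last by rewrite mem_enum.
by move=> j; nra.
Qed.

Lemma vnorm_le_l1 x : vnorm x <= vsum (fun i => Rabs (x i)).
Proof.
have H0 : 0 <= vsum (fun i => Rabs (x i)) by apply: lsum_ge0 => i; apply: Rabs_pos.
rewrite /vnorm -(sqrt_Rsqr _ H0); apply: sqrt_le_1_alt; rewrite /Rsqr.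
apply: Rle_trans (lsum_sq_le _ (fun i => Rabs (x i)) (fun i => Rabs_pos _)).
by apply: Req_le; apply: lsum_ext => i; rewrite -Rabs_mult Rabs_pos_eq; nra.
Qed.

Lemma vnorm_le_coord_bound x M : (forall i, Rabs (x i) <= M) -> vnorm x <= INR n * M.
Proof. by move=> H; apply: Rle_trans (vnorm_le_l1 x) (vsum_le_card _ _ H). Qed.

Lemma dot_le_coord_bound x y M : (forall i, Rabs (x i) <= M) ->
  Rabs (dot x y) <= INR n * M * vnorm y.
Proof.
move=> H; apply: Rle_trans (lsum_abs _ _) _; rewrite Rmult_assoc.
apply: vsum_le_card => i; rewrite Rabs_mult.
by apply: Rmult_le_compat; [apply: Rabs_pos | apply: Rabs_pos | apply: H | apply: coord_le_vnorm].
Qed.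

Lemma vnorm_zero_coord x : vnorm x = 0 -> forall i, x i = 0.
Proof.
move=> H i; have := coord_le_vnorm x i; rewrite H => Hi.
by case: (Req_dec (x i) 0) => // Hne; have := Rabs_pos_lt _ Hne; lra.
Qed.

(* Cauchy-Schwarz, squared form: the quadratic [t |-> |x - t y|^2] is nonnegative. *)
Lemma cauchy_schwarz_sq x y : dot x y * dot x y <= dot x x * dot y y.
Proof.
have Hq : forall t, 0 <= dot x x - 2 * t * dot x y + t * t * dot y y.
{ move=> t; have := dot_self_ge0 (vsub x (vscal t y)).
  by rewrite dot_subl !dot_subr !dot_scall !dot_scalr (dot_sym y x); lra. }
have Hy := dot_self_ge0 y.
case: (Req_dec (dot y y) 0) => Hyy.
- have Hy0 : forall i, y i = 0 by apply: vnorm_zero_coord; rewrite /vnorm Hyy sqrt_0.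
  have -> : dot x y = 0 by apply: lsum_eq0 => i; rewrite Hy0; lra.
  by have := dot_self_ge0 x; nra.
- set r := dot x y / dot y y.
  have Hr : dot x y = r * dot y y by rewrite /r; field.
  by have := Hq r; rewrite Hr; nra.
Qed.

Lemma cauchy_schwarz x y : Rabs (dot x y) <= vnorm x * vnorm y.
Proof.
have Hxy : 0 <= vnorm x * vnorm y by apply: Rmult_le_pos; apply: vnorm_ge0.
rewrite -(Rabs_pos_eq _ Hxy); apply: Rsqr_le_abs_0.
rewrite /Rsqr (_ : vnorm x * vnorm y * (vnorm x * vnorm y) = dot x x * dot y y).
- exact: cauchy_schwarz_sq.
- by rewrite -!vnorm_sq; ring.
Qed.

Lemma vnorm_triang x y : vnorm (vadd x y) <= vnorm x + vnorm y.
Proof.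
have Hn := vnorm_ge0 x; have Hm := vnorm_ge0 y; have Hs := vnorm_ge0 (vadd x y).
have : vnorm (vadd x y) * vnorm (vadd x y) <= (vnorm x + vnorm y) * (vnorm x + vnorm y).
{ have -> : vnorm (vadd x y) * vnorm (vadd x y) = dot x x + 2 * dot x y + dot y y.
  { rewrite vnorm_sq /dot /vsum -!lsum_scal -!lsum_add.
    by apply: lsum_ext => i; rewrite /vadd; ring. }
  have := cauchy_schwarz x y; have := Rle_abs (dot x y).
  by have := vnorm_sq x; have := vnorm_sq y; nra. }
nra.
Qed.

Lemma vnorm_scal t x : vnorm (vscal t x) = Rabs t * vnorm x.
Proof.
rewrite /vnorm dot_scall dot_scalr -Rmult_assoc -(sqrt_Rsqr_abs t) -sqrt_mult_alt //.
by rewrite /Rsqr; nra.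
Qed.

Lemma vnorm_opp x : vnorm (vopp x) = vnorm x.
Proof. by congr sqrt; apply: lsum_ext => i; rewrite /vopp; ring. Qed.

Lemma vnorm_sub_sym x y : vnorm (vsub x y) = vnorm (vsub y x).
Proof. by congr sqrt; apply: lsum_ext => i; rewrite /vsub; ring. Qed.

Lemma vnorm_triang_sub x y z : vnorm (vsub x z) <= vnorm (vsub x y) + vnorm (vsub y z).
Proof.
have -> : vsub x z = vadd (vsub x y) (vsub y z).
{ by apply: functional_extensionality => i; rewrite /vadd /vsub; ring. }
exact: vnorm_triang.
Qed.

Lemma vnorm_sub_self x : vnorm (vsub x x) = 0.
Proof.
rewrite /vnorm (_ : dot (vsub x x) (vsub x x) = 0) ?sqrt_0 //.
by apply: lsum_eq0 => i; rewrite /vsub; ring.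
Qed.
End Euclid.

Lemma inf_exists (E : R -> Prop) : (exists t, E t) -> (forall t, E t -> 0 <= t) ->
  exists r, is_inf E r.
Proof.
move=> [t0 Ht0] Hlb.
have Hb : bound (fun u => E (- u)) by exists 0 => u Hu; have := Hlb _ Hu; lra.
have Hne : exists u, E (- u) by exists (- t0); rewrite Ropp_involutive.
case: (completeness _ Hb Hne) => M [HM1 HM2]; exists (- M); split.
- move=> t Ht; have : - t <= M by apply: HM1; rewrite Ropp_involutive.
  lra.
- move=> s Hs; have : M <= - s by apply: HM2 => u Hu; have := Hs _ Hu; lra.
  lra.
Qed.

Section Distance.
Context {n : nat} (S : vec n -> Prop).
Hypothesis S_nonempty : exists y, S y.

Lemma setdist_inf x : is_inf (fun t => exists y, S y /\ t = vnorm (vsub x y)) (setdist S x).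
Proof.
apply: epsilon_spec; apply: inf_exists.
- by case: S_nonempty => y Hy; exists (vnorm (vsub x y)), y.
- by move=> t [y [_ ->]]; apply: vnorm_ge0.
Qed.

Lemma setdist_le x y : S y -> setdist S x <= vnorm (vsub x y).
Proof. by move=> Hy; apply: (setdist_inf x).1; exists y. Qed.

Lemma setdist_approx x eps : 0 < eps ->
  exists y, S y /\ vnorm (vsub x y) < setdist S x + eps.
Proof.
move=> He; apply: NNPP => Hn.
have : setdist S x + eps <= setdist S x.
{ apply: (setdist_inf x).2 => t [y [Hy ->]].
  by apply: Rnot_lt_le => Hlt; apply: Hn; exists y. }
lra.
Qed.

Lemma setdist_lip x x' : setdist S x <= setdist S x' + vnorm (vsub x x').
Proof.
have : setdist S x - vnorm (vsub x x') <= setdist S x'.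
{ apply: (setdist_inf x').2 => t [y [Hy ->]].
  by have := setdist_le x y Hy; have := vnorm_triang_sub x x' y; lra. }
lra.
Qed.
End Distance.

Lemma common_radius k (P : 'I_k -> R -> Prop) :
  (forall a d d', 0 < d' <= d -> P a d -> P a d') ->
  (forall a, exists d, 0 < d /\ P a d) ->
  exists d, 0 < d /\ forall a, P a d.
Proof.
move=> Hmono Hex.
suff [d [Hd H]] : exists d, 0 < d /\ forall a, a \in enum 'I_k -> P a d.
{ by exists d; split => // a; apply: H; rewrite mem_enum. }
elim: (enum 'I_k) => [|a s [d [Hd IH]]]; first by exists 1; split; [lra |].
case: (Hex a) => da [Hda Pa].
have Hmin : 0 < Rmin d da by apply: Rmin_pos.
exists (Rmin d da); split => // b; rewrite in_cons => /orP [/eqP ->|Hb].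
- by apply: Hmono Pa; split => //; apply: Rmin_r.
- by apply: Hmono (IH _ Hb); split => //; apply: Rmin_l.
Qed.

Section Calculus.
Context {n : nat}.
Implicit Types x y s : vec n.

Lemma has_grad_cont (f : vec n -> R) G x : has_grad f G x -> cont_at f x.
Proof.
move=> Hf eps He.
case: (Hf 1 Rlt_0_1) => d [Hd Hb].
have HG := vnorm_ge0 G.
have He' : 0 < eps / (vnorm G + 2) by apply: Rdiv_lt_0_compat; lra.
exists (Rmin d (eps / (vnorm G + 2))); split; first exact: Rmin_pos.
move=> y /Rmin_Rgt [Hy1 Hy2].
have Hs : vnorm (vsub y x) * (vnorm G + 2) < eps.
{ by apply: lt_div_mul => //; lra. }
have E : vadd x (vsub y x) = y by apply: functional_extensionality => i; rewrite /vadd /vsub; ring.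
have := Hb _ Hy1; rewrite E => Hy.
have := cauchy_schwarz G (vsub y x); have := vnorm_ge0 (vsub y x).
have := Rabs_triang (f y - f x - dot G (vsub y x)) (dot G (vsub y x)).
have -> : f y - f x - dot G (vsub y x) + dot G (vsub y x) = f y - f x by ring.
have := Rle_abs (dot G (vsub y x)); nra.
Qed.

Lemma vec_cont {l} (F : vec n -> vec l) x :
  (forall i, cont_at (fun y => F y i) x) ->
  forall eps, 0 < eps -> exists d, 0 < d /\
    forall y, vnorm (vsub y x) < d -> vnorm (vsub (F y) (F x)) < eps.
Proof.
move=> Hc eps He.
have He' := card_share_pos l eps He.
case: (common_radius l (fun i d => forall y, vnorm (vsub y x) < d ->
                                  Rabs (F y i - F x i) < eps / (INR l + 1))).
- by move=> i d d' Hd P y Hy; apply: P; lra.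
- by move=> i; apply: Hc.
move=> d [Hd P]; exists d; split => // y Hy.
apply: Rle_lt_trans (vnorm_le_coord_bound _ (eps / (INR l + 1)) _) _.
- by move=> i; apply: Rlt_le; apply: P.
- exact: card_share_lt.
Qed.

Lemma line_deriv (f : vec n -> R) G y s t :
  has_grad f G (vadd y (vscal t s)) ->
  derivable_pt_lim (fun t => f (vadd y (vscal t s))) t (dot G s).
Proof.
move=> Hf eps He; set p := vadd y (vscal t s).
have Hs := vnorm_ge0 s.
set e0 := eps / (2 * (vnorm s + 1)).
have He0 : 0 < e0 by apply: Rdiv_lt_0_compat; lra.
have He0s : e0 * vnorm s < eps.
{ have : e0 * (2 * (vnorm s + 1)) = eps by rewrite /e0; field; lra.
  nra. }
case: (Hf e0 He0) => d [Hd Hb].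
have Hdd : 0 < d / (vnorm s + 1) by apply: Rdiv_lt_0_compat; lra.
exists (mkposreal _ Hdd) => h Hh0 /= Hh.
have -> : vadd y (vscal (t + h) s) = vadd p (vscal h s).
{ by apply: functional_extensionality => i; rewrite /p /vadd /vscal; ring. }
have Ha : 0 < Rabs h by apply: Rabs_pos_lt.
have Hhs : Rabs h * (vnorm s + 1) < d.
{ by apply: lt_div_mul => //; lra. }
have := Hb (vscal h s); rewrite -/p dot_scalr vnorm_scal => Hbh_at.
have Hbh := Hbh_at ltac:(nra).
have -> : (f (vadd p (vscal h s)) - f p) / h - dot G s
        = (f (vadd p (vscal h s)) - f p - h * dot G s) * / h by field.
rewrite Rabs_mult Rabs_inv.
apply: Rle_lt_trans He0s.
apply: (Rmult_le_reg_r (Rabs h)) => //; rewrite Rmult_assoc Rinv_l; last lra.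
nra.
Qed.

Lemma poly2_deriv A B c :
  derivable_pt_lim (fun t => t * A + / 2 * (t * t) * B) c (A + c * B).
Proof.
move=> eps He.
have HB := Rabs_pos B.
have Hd : 0 < eps / (Rabs B + 1) by apply: Rdiv_lt_0_compat; lra.
exists (mkposreal _ Hd) => h Hh0 /= Hh.
have -> : ((c + h) * A + / 2 * ((c + h) * (c + h)) * B - (c * A + / 2 * (c * c) * B)) / h
          - (A + c * B) = / 2 * h * B by field.
rewrite !Rabs_mult Rabs_inv Rabs_pos_eq; last lra.
have Ha := Rabs_pos h.
have : Rabs h * (Rabs B + 1) < eps.
{ by apply: lt_div_mul => //; lra. }
nra.
Qed.

(* Mean value theorem on a segment, with an arbitrary affine-quadratic correction
   [t A + t^2 B / 2]; [B = 0] gives the first-order form, [B = s' H s] the Taylor form. *)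
Lemma segment_mean_value (f : vec n -> R) (Df : vec n -> vec n) b v A B :
  (forall t, 0 <= t <= 1 -> has_grad f (Df (vadd b (vscal t v))) (vadd b (vscal t v))) ->
  exists c, 0 < c < 1 /\
    f (vadd b v) - f b - A - / 2 * B = dot (Df (vadd b (vscal c v))) v - A - c * B.
Proof.
move=> Hg.
set phi := fun t => f (vadd b (vscal t v)) - (t * A + / 2 * (t * t) * B).
have Hder : forall c, 0 <= c <= 1 ->
  derivable_pt_lim phi c (dot (Df (vadd b (vscal c v))) v - (A + c * B)).
{ move=> c Hc; apply: derivable_pt_lim_minus; last exact: poly2_deriv.
  by apply: line_deriv; apply: Hg. }
case: (MVT_cor2 phi _ 0 1 Rlt_0_1 Hder) => c [Hmvt Hc]; exists c; split => //.
have E0 : vadd b (vscal 0 v) = b.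
{ by apply: functional_extensionality => i; rewrite /vadd /vscal; ring. }
have E1 : vadd b (vscal 1 v) = vadd b v.
{ by apply: functional_extensionality => i; rewrite /vadd /vscal; ring. }
move: Hmvt; rewrite /phi E0 E1; lra.
Qed.

Lemma ball_segment (yb a b : vec n) r t : vnorm (vsub a yb) < r -> vnorm (vsub b yb) < r ->
  0 <= t <= 1 -> vnorm (vsub (vadd b (vscal t (vsub a b))) yb) < r.
Proof.
move=> Ha Hb Ht.
have -> : vsub (vadd b (vscal t (vsub a b))) yb
        = vadd (vscal (1 - t) (vsub b yb)) (vscal t (vsub a yb)).
{ by apply: functional_extensionality => i; rewrite /vsub /vadd /vscal; ring. }
apply: Rle_lt_trans (vnorm_triang _ _) _.
rewrite !vnorm_scal !Rabs_pos_eq; try lra.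
have := vnorm_ge0 (vsub b yb); have := vnorm_ge0 (vsub a yb).
by case: (Req_dec t 0) => [->|Ht0]; nra.
Qed.
End Calculus.

Section Expansions.
Context {n : nat}.
Implicit Types x y s u w : vec n.

Lemma gradient_first_order {k} (D : vec n -> vec k) (H : 'I_k -> vec n) y0 :
  (forall a, has_grad (fun y => D y a) (H a) y0) ->
  forall eps, 0 < eps -> exists d, 0 < d /\ forall s, vnorm s < d -> forall a,
    Rabs (D (vadd y0 s) a - D y0 a - dot (H a) s) <= eps * vnorm s.
Proof.
move=> HD eps He.
case: (common_radius k (fun a d => forall s, vnorm s < d ->
         Rabs (D (vadd y0 s) a - D y0 a - dot (H a) s) <= eps * vnorm s)).
- by move=> a d d' Hd P s Hs; apply: P; lra.
- by move=> a; apply: HD.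
- by move=> d [Hd P]; exists d; split => // s Hs a; apply: P.
Qed.

Lemma taylor2 (f : vec n -> R) (Df : vec n -> vec n) (H : 'I_n -> vec n) y0 rho :
  0 < rho ->
  (forall y, vnorm (vsub y y0) < rho -> has_grad f (Df y) y) ->
  (forall a, has_grad (fun y => Df y a) (H a) y0) ->
  forall eps, 0 < eps -> exists d, 0 < d /\ forall s, vnorm s < d ->
    Rabs (f (vadd y0 s) - f y0 - dot (Df y0) s - / 2 * quad H s)
      <= eps * (vnorm s * vnorm s).
Proof.
move=> Hrho Hg HH eps He.
set e' := eps / (INR n + 1).
case: (gradient_first_order Df H y0 HH e' (card_share_pos n eps He)) => d [Hd HD].
exists (Rmin rho d); split; first exact: Rmin_pos.
move=> s /Rmin_Rgt [Hs1 Hs2].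
have Hs := vnorm_ge0 s.
have Hcs : forall c, 0 <= c <= 1 -> vnorm (vscal c s) <= vnorm s.
{ by move=> c Hc; rewrite vnorm_scal Rabs_pos_eq; nra. }
case: (segment_mean_value f Df y0 s (dot (Df y0) s) (quad H s)) => [c Hc|c [Hc ->]].
{ apply: Hg; have -> : vsub (vadd y0 (vscal c s)) y0 = vscal c s.
  { by apply: functional_extensionality => i; rewrite /vsub /vadd /vscal; ring. }
  by have := Hcs c Hc; lra. }
have -> : dot (Df (vadd y0 (vscal c s))) s - dot (Df y0) s - c * quad H s
        = dot (fun a => Df (vadd y0 (vscal c s)) a - Df y0 a - c * dot (H a) s) s.
{ rewrite /quad /mapply /dot /vsum -lsum_scal -!lsum_sub.
  by apply: lsum_ext => a; ring. }
apply: Rle_trans (dot_le_coord_bound _ s (e' * vnorm s) _) _.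
- move=> a; rewrite -dot_scalr.
  have Hc' : 0 <= c <= 1 by lra.
  apply: Rle_trans (HD _ _ a) _; first by have := Hcs c Hc'; lra.
  by apply: Rmult_le_compat_l; [apply: Rlt_le; apply: card_share_pos | apply: Hcs].
- have := card_share_lt n eps He; rewrite -/e' => Hlt.
  have -> : INR n * (e' * vnorm s) * vnorm s = (INR n * e') * (vnorm s * vnorm s) by ring.
  by apply: Rmult_le_compat_r; nra.
Qed.

Lemma strict_diff (f : vec n -> R) (Df : vec n -> vec n) yb rho :
  0 < rho ->
  (forall y, vnorm (vsub y yb) < rho -> has_grad f (Df y) y) ->
  (forall c, cont_at (fun y => Df y c) yb) ->
  forall beta, 0 < beta -> exists r, 0 < r /\
    forall a b, vnorm (vsub a yb) < r -> vnorm (vsub b yb) < r ->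
      Rabs (f a - f b - dot (Df yb) (vsub a b)) <= beta * vnorm (vsub a b).
Proof.
move=> Hrho Hg HDcont beta Hb.
case: (vec_cont Df yb HDcont beta Hb) => d [Hd HDc].
exists (Rmin rho d); split; first exact: Rmin_pos.
move=> a b Ha Hb'.
have Hseg := fun t Ht => ball_segment yb a b _ t Ha Hb' Ht.
set v := vsub a b in Hseg *.
case: (segment_mean_value f Df b v (dot (Df yb) v) 0) => [t Ht|c [Hc]].
{ apply: Hg; have := Hseg t Ht; have := Rmin_l rho d; lra. }
have -> : vadd b v = a by apply: functional_extensionality => i; rewrite /vadd /v /vsub; ring.
rewrite Rmult_0_r Rmult_0_r !Rminus_0_r => ->.
rewrite -dot_subl; apply: Rle_trans (cauchy_schwarz _ _) _.
apply: Rmult_le_compat_r; first exact: vnorm_ge0.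
apply: Rlt_le; apply: HDc.
by have := Hseg c ltac:(lra); have := Rmin_r rho d; lra.
Qed.

Definition entry_sum (H : 'I_n -> vec n) : R := vsum (fun a => vsum (fun b => Rabs (H a b))).

Lemma entry_sum_ge0 H : 0 <= entry_sum H.
Proof. by apply: lsum_ge0 => a; apply: lsum_ge0 => b; apply: Rabs_pos. Qed.

Lemma bilinear_bound (H : 'I_n -> vec n) x y :
  Rabs (dot x (mapply H y)) <= entry_sum H * vnorm x * vnorm y.
Proof.
have Hx := vnorm_ge0 x; have Hy := vnorm_ge0 y.
apply: Rle_trans (lsum_abs _ _) _.
rewrite /entry_sum /vsum Rmult_assoc -lsum_scalr; apply: lsum_le => a.
rewrite Rabs_mult /mapply; apply: Rle_trans (Rmult_le_compat_l _ _ _ (Rabs_pos _) (lsum_abs _ _)) _.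
rewrite -lsum_scal -lsum_scalr; apply: lsum_le => b.
rewrite Rabs_mult.
have Hxy : Rabs (x a) * Rabs (y b) <= vnorm x * vnorm y.
{ by apply: Rmult_le_compat; try apply: Rabs_pos; apply: coord_le_vnorm. }
have := Rmult_le_compat_l _ _ _ (Rabs_pos (H a b)) Hxy.
lra.
Qed.

Lemma mapply_vadd (H : 'I_n -> vec n) x y : mapply H (vadd x y) = vadd (mapply H x) (mapply H y).
Proof. by apply: functional_extensionality => i; rewrite /mapply /vadd dot_addr. Qed.

Lemma mapply_vscal (H : 'I_n -> vec n) t x : mapply H (vscal t x) = vscal t (mapply H x).
Proof. by apply: functional_extensionality => i; rewrite /mapply /vscal dot_scalr. Qed.

Lemma dot_addl x y z : dot (vadd x y) z = dot x z + dot y z.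
Proof. by rewrite dot_sym dot_addr !(dot_sym z). Qed.

Lemma quad_pert (H : 'I_n -> vec n) t w u :
  Rabs (quad H (vadd (vscal t w) u) - t * t * quad H w) <=
  entry_sum H * (2 * Rabs t * vnorm w * vnorm u + vnorm u * vnorm u).
Proof.
have -> : quad H (vadd (vscal t w) u) - t * t * quad H w
  = t * dot w (mapply H u) + t * dot u (mapply H w) + dot u (mapply H u).
{ rewrite /quad mapply_vadd mapply_vscal !dot_addl !dot_addr !dot_scall !dot_scalr; ring. }
have B1 := bilinear_bound H w u; have B2 := bilinear_bound H u w; have B3 := bilinear_bound H u u.
apply: Rle_trans (Rabs_triang _ _) _.
apply: Rle_trans (Rplus_le_compat_r _ _ _ (Rabs_triang _ _)) _.
rewrite !Rabs_mult.
have := Rabs_pos t; have := Rabs_pos (dot w (mapply H u)); have := Rabs_pos (dot u (mapply H w)).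
nra.
Qed.

Lemma quad_pert_parabolic (H : 'I_n -> vec n) t w u W : 0 < t <= 1 ->
  vnorm w <= W -> vnorm u <= t * t * W ->
  Rabs (quad H (vadd (vscal t w) u) - t * t * quad H w)
    <= 3 * entry_sum H * (W * W) * (t * (t * t)).
Proof.
move=> Ht Hw Hu.
have Hu0 := vnorm_ge0 u; have Hw0 := vnorm_ge0 w; have HK := entry_sum_ge0 H.
apply: Rle_trans (quad_pert H t w u) _; rewrite (Rabs_pos_eq t); last lra.
have H1 : vnorm u * vnorm u <= (t * t * W) * (t * t * W) by apply: Rmult_le_compat; nra.
have H2 : vnorm w * vnorm u <= W * (t * t * W) by apply: Rmult_le_compat; nra.
have H3 : (t * t * W) * (t * t * W) <= (W * W) * (t * (t * t)).
{ have -> : (t * t * W) * (t * t * W) = (W * W) * (t * (t * t)) * t by ring.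
  have : 0 <= (W * W) * (t * (t * t)) by apply: Rmult_le_pos; nra.
  nra. }
have H4 := Rmult_le_compat_l (2 * t) _ _ ltac:(lra) H2.
rewrite (_ : 3 * entry_sum H * (W * W) * (t * (t * t))
           = entry_sum H * (3 * (W * W) * (t * (t * t)))); last ring.
by apply: Rmult_le_compat_l => //; nra.
Qed.

Lemma parabolic_taylor (f : vec n -> R) (Df : vec n -> vec n) (H : 'I_n -> vec n) x0 rho w W :
  0 < rho ->
  (forall y, vnorm (vsub y x0) < rho -> has_grad f (Df y) y) ->
  (forall a, has_grad (fun y => Df y a) (H a) x0) ->
  1 <= W -> vnorm w <= W ->
  forall eps, 0 < eps -> exists tau, 0 < tau /\ forall t u, 0 < t < tau ->
    vnorm u <= t * t * W ->
    Rabs (f (vadd x0 (vadd (vscal t w) u)) - f x0 - t * dot (Df x0) w - dot (Df x0) u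
          - / 2 * (t * t) * quad H w) <= eps * (t * t).
Proof.
move=> Hrho Hg HH HW Hw eps He.
have HWW : 0 < W * W by nra.
case: (taylor2 f Df H x0 rho Hrho Hg HH (eps / (8 * (W * W)))) => [|d [Hd Htaylor]].
{ by apply: Rdiv_lt_0_compat; lra. }
set K := entry_sum H.
have HK : 0 <= K := entry_sum_ge0 H.
have HKW : 0 <= K * (W * W) by nra.
exists (Rmin (Rmin 1 (d / (2 * W))) (eps / (3 * K * (W * W) + 1))); split.
{ by repeat apply: Rmin_pos; try apply: Rdiv_lt_0_compat; lra. }
move=> t u [Ht0 /Rmin_Rgt [/Rmin_Rgt [Ht1 Htd] Hte]] Hu.
have Hu0 := vnorm_ge0 u; have Hw0 := vnorm_ge0 w.
set s := vadd (vscal t w) u.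
have Hs : vnorm s <= 2 * t * W.
{ apply: Rle_trans (vnorm_triang _ _) _; rewrite vnorm_scal Rabs_pos_eq; nra. }
have Htd' : t * (2 * W) < d by apply: lt_div_mul => //; lra.
have Hte' : t * (3 * K * (W * W) + 1) < eps by apply: lt_div_mul => //; lra.
have Ht2 := Htaylor s ltac:(lra).
have Hq := quad_pert_parabolic H t w u W ltac:(lra) Hw Hu; rewrite -/K -/s in Hq.
have Hsq : eps / (8 * (W * W)) * (vnorm s * vnorm s) <= eps / 2 * (t * t).
{ have -> : eps / 2 * (t * t) = eps / (8 * (W * W)) * (4 * W * W * (t * t)) by field; lra.
  apply: Rmult_le_compat_l; first by apply: Rlt_le; apply: Rdiv_lt_0_compat; lra.
  by have := vnorm_ge0 s; nra. }
have Hpert : 3 * K * (W * W) * (t * (t * t)) <= eps * (t * t).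
{ have Hlt : t * (3 * K * (W * W)) <= eps by lra.
  by have := Rmult_le_compat_r (t * t) _ _ ltac:(nra) Hlt; lra. }
have -> : f (vadd x0 s) - f x0 - t * dot (Df x0) w - dot (Df x0) u - / 2 * (t * t) * quad H w
  = (f (vadd x0 s) - f x0 - dot (Df x0) s - / 2 * quad H s)
    + / 2 * (quad H s - t * t * quad H w) by rewrite /s dot_addr dot_scalr; ring.
apply: Rle_trans (Rabs_triang _ _) _.
rewrite Rabs_mult (Rabs_pos_eq (/ 2)); lra.
Qed.
End Expansions.

Lemma right_inverse {m l} (B : 'I_l -> vec m) :
  (forall u : vec l, exists v : vec m, forall i, mapply B v i = u i) ->
  exists (Rf : vec l -> vec m) KR, 0 < KR /\ (forall u i, mapply B (Rf u) i = u i) /\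
     (forall u, vnorm (Rf u) <= KR * vnorm u).
Proof.
move=> Hs.
set e := fun i : 'I_l => (fun j : 'I_l => if j == i then 1 else 0) : vec l.
set vi := fun i => epsilon (inhabits (fun _ : 'I_m => 0))
                           (fun v => forall j, mapply B v j = e i j).
have Hvi : forall i j, mapply B (vi i) j = e i j.
{ by move=> i; apply: (epsilon_spec _ (fun v => forall j, mapply B v j = e i j)). }
set Rf := fun u : vec l => (fun k : 'I_m => vsum (fun i => u i * vi i k)) : vec m.
set K0 := vsum (fun k : 'I_m => vsum (fun i : 'I_l => Rabs (vi i k))).
have HK0 : 0 <= K0 by apply: lsum_ge0 => k; apply: lsum_ge0 => i; apply: Rabs_pos.
exists Rf, (K0 + 1); split; first lra; split.
- move=> u j.
  transitivity (vsum (fun i => u i * (if i == j then 1 else 0))); last first.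
  { by apply: (lsum_delta (enum 'I_l) u j); [apply: enum_uniq | rewrite mem_enum]. }
  transitivity (vsum (fun i => u i * dot (B j) (vi i))).
  + rewrite /mapply /dot /vsum.
    transitivity (lsum (enum 'I_m) (fun k => lsum (enum 'I_l) (fun i => u i * (B j k * vi i k)))).
    * by apply: lsum_ext => k; rewrite -lsum_scal; apply: lsum_ext => i; ring.
    * by rewrite lsum_swap; apply: lsum_ext => i; rewrite -lsum_scal.
  + by apply: lsum_ext => i; have := Hvi i j; rewrite /mapply => ->; rewrite /e eq_sym.
- move=> u; apply: Rle_trans (vnorm_le_l1 _) _.
  have Hu := vnorm_ge0 u.
  apply: (Rle_trans _ (K0 * vnorm u)); last nra.
  rewrite /K0 /vsum -lsum_scalr; apply: lsum_le => k.
  apply: Rle_trans (lsum_abs _ _) _.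
  rewrite -lsum_scalr; apply: lsum_le => i.
  rewrite Rabs_mult Rmult_comm; apply: Rmult_le_compat_l; first exact: Rabs_pos.
  exact: coord_le_vnorm.
Qed.

Lemma strict_diff_vec {m l} (F : vec m -> vec l) (DF : vec m -> 'I_l -> vec m) yb rho :
  0 < rho ->
  (forall y i, vnorm (vsub y yb) < rho -> has_grad (fun x => F x i) (DF y i) y) ->
  (forall i c, cont_at (fun y => DF y i c) yb) ->
  forall beta, 0 < beta -> exists r, 0 < r /\
    forall a b, vnorm (vsub a yb) < r -> vnorm (vsub b yb) < r ->
      vnorm (vsub (vsub (F a) (F b)) (mapply (DF yb) (vsub a b))) <= beta * vnorm (vsub a b).
Proof.
move=> Hrho Hg Hc beta Hb.
set b' := beta / (INR l + 1).
case: (common_radius l (fun i r => forall a b,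
          vnorm (vsub a yb) < r -> vnorm (vsub b yb) < r ->
          Rabs (F a i - F b i - dot (DF yb i) (vsub a b)) <= b' * vnorm (vsub a b))).
- by move=> i d d' Hd P a b Ha Hb'; apply: P; lra.
- move=> i; exact: (strict_diff (fun x => F x i) (fun x => DF x i) yb rho Hrho
                     (fun y Hy => Hg y i Hy) (Hc i) b' (card_share_pos l beta Hb)).
move=> r [Hr P]; exists r; split => // a b Ha Hb'.
apply: Rle_trans (vnorm_le_coord_bound _ (b' * vnorm (vsub a b)) _) _.
- by move=> i; apply: P.
- rewrite -Rmult_assoc; apply: Rmult_le_compat_r; first exact: vnorm_ge0.
  exact: Rlt_le (card_share_lt l beta Hb).
Qed.

Lemma half_pow_pos j : 0 < (/ 2) ^ j.
Proof. by apply: pow_lt; lra. Qed.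

Lemma half_pow_small eta : 0 < eta -> exists N, forall j, (N <= j)%coq_nat -> (/ 2) ^ j < eta.
Proof.
move=> He; case: (pow_lt_1_zero (/ 2) _ eta He) => [|N HN].
{ by rewrite Rabs_pos_eq; lra. }
by exists N => j Hj; have := HN j Hj; rewrite Rabs_pos_eq //; apply: pow_le; lra.
Qed.

Lemma half_pow_le j k : (j <= k)%coq_nat -> (/ 2) ^ k <= (/ 2) ^ j.
Proof.
move=> H; have -> : k = (j + Nat.sub k j)%coq_nat by lia.
elim: (Nat.sub k j) => [|d IH]; first by rewrite Nat.add_0_r; apply: Rle_refl.
by rewrite Nat.add_succ_r /=; have := half_pow_pos (j + d)%coq_nat; lra.
Qed.

Lemma lim_bound (u : nat -> R) L a M N : Un_cv u L ->
  (forall p, (N <= p)%coq_nat -> Rabs (u p - a) <= M) -> Rabs (L - a) <= M.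
Proof.
move=> Hu Hb; apply: Rnot_lt_le => Hlt.
case: (Hu (Rabs (L - a) - M)) => [|N1 HN1]; first lra.
have := HN1 (Nat.max N N1) ltac:(lia); rewrite /Rdist => H1.
have := Hb (Nat.max N N1) ltac:(lia) => H2.
have := Rabs_triang (u (Nat.max N N1) - a) (L - u (Nat.max N N1)).
have -> : u (Nat.max N N1) - a + (L - u (Nat.max N N1)) = L - a by ring.
by rewrite (Rabs_minus_sym L (u _)); lra.
Qed.

Lemma geometric_cauchy_limit {m} (Y : nat -> vec m) M :
  (forall N p q, (N <= q)%coq_nat -> (q <= p)%coq_nat ->
     vnorm (vsub (Y p) (Y q)) <= M * (/ 2) ^ N) ->
  exists ys : vec m, forall j k, Rabs (ys k - Y j k) <= M * (/ 2) ^ j.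
Proof.
move=> HY.
have HM : 0 <= M.
{ by have := HY 0%nat 0%nat 0%nat (le_n 0) (le_n 0); rewrite vnorm_sub_self /=; lra. }
have Hcoord : forall N p q k, (N <= q)%coq_nat -> (q <= p)%coq_nat ->
                Rabs (Y p k - Y q k) <= M * (/ 2) ^ N.
{ move=> N p q k H1 H2.
  exact: Rle_trans (coord_le_vnorm (vsub (Y p) (Y q)) k) (HY N p q H1 H2). }
have Hcc : forall k, Cauchy_crit (fun j => Y j k).
{ move=> k eps He.
  case: (half_pow_small (eps / (M + 1))) => [|N HN]; first by apply: Rdiv_lt_0_compat; lra.
  have HMN : M * (/ 2) ^ N < eps.
  { have := lt_div_mul _ _ (M + 1) ltac:(lra) (HN N (le_n N)); have := half_pow_pos N; nra. }
  exists N => p q Hp Hq; rewrite /R_dist.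
  case: (Nat.le_ge_cases p q) => Hpq.
  - by rewrite Rabs_minus_sym; apply: Rle_lt_trans HMN; apply: Hcoord.
  - by apply: Rle_lt_trans HMN; apply: Hcoord. }
exists (fun k => proj1_sig (R_complete _ (Hcc k))) => j k.
apply: (lim_bound _ _ _ _ j (proj2_sig (R_complete _ (Hcc k)))) => p Hp.
exact: Hcoord.
Qed.

Lemma eq_of_close a b : (forall eps, 0 < eps -> Rabs (a - b) < eps) -> a = b.
Proof.
move=> H; apply: NNPP => Hne.
have Hpos : 0 < Rabs (a - b) by apply: Rabs_pos_lt => E; apply: Hne; lra.
by have := H _ Hpos; lra.
Qed.

(* Graves' Newton-type iteration [y_(j+1) = y_j - R(F y_j - c)] with a bounded right
   inverse [R] of the derivative [B]: the residuals halve at each step, so the iterates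
   converge to a solution of [F y = c] at distance [O(|F y0 - c|)] from [y0]. *)
Section Newton.
Context {m l : nat} (F : vec m -> vec l) (B : 'I_l -> vec m) (Rf : vec l -> vec m)
  (KR r1 : R) (yb : vec m) (c : vec l) (y0 : vec m).
Hypothesis KR_pos : 0 < KR.
Hypothesis Rf_right_inv : forall u i, mapply B (Rf u) i = u i.
Hypothesis Rf_bound : forall u, vnorm (Rf u) <= KR * vnorm u.
Hypothesis F_strict : forall a b, vnorm (vsub a yb) < r1 -> vnorm (vsub b yb) < r1 ->
  vnorm (vsub (vsub (F a) (F b)) (mapply B (vsub a b))) <= / (2 * KR) * vnorm (vsub a b).
Hypothesis F_cont : forall y i, vnorm (vsub y yb) < r1 -> cont_at (fun x => F x i) y.

Local Notation r0 := (vnorm (vsub (F y0) c)).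
Local Notation K := (2 * (INR m + 1) * KR).
Hypothesis start_close : vnorm (vsub y0 yb) + K * r0 < r1.

Fixpoint newton (j : nat) : vec m :=
  if j is j'.+1 then vsub (newton j') (Rf (vsub (F (newton j')) c)) else y0.

Lemma newton_step_bound j :
  vnorm (vsub (newton j.+1) (newton j)) <= KR * vnorm (vsub (F (newton j)) c).
Proof.
have -> : vsub (newton j.+1) (newton j) = vopp (Rf (vsub (F (newton j)) c)).
{ by apply: functional_extensionality => i; rewrite /= /vsub /vopp; ring. }
by rewrite vnorm_opp.
Qed.

Lemma newton_residual j : vsub (F (newton j.+1)) c =
  vsub (vsub (F (newton j.+1)) (F (newton j))) (mapply B (vsub (newton j.+1) (newton j))).
Proof.
apply: functional_extensionality => i.
have -> : vsub (newton j.+1) (newton j) = vscal (-1) (Rf (vsub (F (newton j)) c)).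
{ by apply: functional_extensionality => k; rewrite /= /vsub /vscal; ring. }
rewrite /vsub /mapply dot_scalr; have := Rf_right_inv (vsub (F (newton j)) c) i.
by rewrite /mapply => ->; rewrite /vsub; ring.
Qed.

Lemma near_start_in_ball y : vnorm (vsub y y0) <= 2 * KR * r0 -> vnorm (vsub y yb) < r1.
Proof.
move=> Hy; apply: Rle_lt_trans (vnorm_triang_sub _ y0 _) _.
have : 0 <= INR m * (KR * r0).
{ by apply: Rmult_le_pos; [apply: pos_INR | have := vnorm_ge0 (vsub (F y0) c); nra]. }
lra.
Qed.

Lemma newton_invariant j :
  vnorm (vsub (newton j) y0) <= 2 * KR * r0 * (1 - (/ 2) ^ j) /\
  vnorm (vsub (F (newton j)) c) <= r0 * (/ 2) ^ j.
Proof.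
have Hr0 := vnorm_ge0 (vsub (F y0) c).
elim: j => [|j [IH1 IH2]].
{ by rewrite /= vnorm_sub_self; split; lra. }
have Hp := half_pow_pos j.
have Hstep : vnorm (vsub (newton j.+1) (newton j)) <= KR * (r0 * (/ 2) ^ j).
{ by apply: Rle_trans (newton_step_bound j) _; apply: Rmult_le_compat_l; lra. }
have H1 : vnorm (vsub (newton j.+1) y0) <= 2 * KR * r0 * (1 - (/ 2) ^ j.+1).
{ by apply: Rle_trans (vnorm_triang_sub _ (newton j) _) _; rewrite -tech_pow_Rmult; nra. }
split => //.
have Hin : forall k, vnorm (vsub (newton k) y0) <= 2 * KR * r0 * (1 - (/ 2) ^ k) ->
                    vnorm (vsub (newton k) yb) < r1.
{ move=> k Hk; apply: near_start_in_ball.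
  have : 0 <= 2 * KR * r0 by nra.
  by have := half_pow_pos k; nra. }
rewrite newton_residual; apply: Rle_trans (F_strict _ _ (Hin _ H1) (Hin _ IH1)) _.
apply: Rle_trans (Rmult_le_compat_l _ _ _ _ Hstep) _.
- by apply: Rlt_le; apply: Rinv_0_lt_compat; lra.
- by rewrite -tech_pow_Rmult; apply: Req_le; field; lra.
Qed.

Lemma newton_cauchy N p q : (N <= q)%coq_nat -> (q <= p)%coq_nat ->
  vnorm (vsub (newton p) (newton q)) <= 2 * KR * r0 * (/ 2) ^ N.
Proof.
have Hr0 := vnorm_ge0 (vsub (F y0) c).
have Hgap : forall d, vnorm (vsub (newton (q + d)%coq_nat) (newton q))
                        <= 2 * KR * r0 * ((/ 2) ^ q - (/ 2) ^ (q + d)%coq_nat).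
{ elim => [|d IH]; first by rewrite Nat.add_0_r vnorm_sub_self; lra.
  rewrite Nat.add_succ_r; apply: Rle_trans (vnorm_triang_sub _ (newton (q + d)%coq_nat) _) _.
  have := Rle_trans _ _ _ (newton_step_bound (q + d)%coq_nat)
    (Rmult_le_compat_l _ _ _ (Rlt_le _ _ KR_pos) (newton_invariant (q + d)%coq_nat).2).
  by rewrite -tech_pow_Rmult; nra. }
move=> HNq Hqp; have -> : p = (q + Nat.sub p q)%coq_nat by lia.
apply: Rle_trans (Hgap _) _.
have := half_pow_pos (q + Nat.sub p q)%coq_nat; have := half_pow_le _ _ HNq.
have : 0 <= 2 * KR * r0 by nra.
nra.
Qed.

Lemma newton_solution : exists ys, F ys = c /\ vnorm (vsub y0 ys) <= K * r0.
Proof.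
have Hr0 := vnorm_ge0 (vsub (F y0) c); have Hm := pos_INR m.
case: (geometric_cauchy_limit newton (2 * KR * r0) newton_cauchy) => ys Hys.
have Hfar : forall j, vnorm (vsub (newton j) ys) <= INR m * (2 * KR * r0 * (/ 2) ^ j).
{ by move=> j; apply: vnorm_le_coord_bound => k; rewrite /vsub Rabs_minus_sym. }
have Hclose : vnorm (vsub y0 ys) <= K * r0.
{ by apply: Rle_trans (Hfar 0%nat) _; rewrite pow_O; nra. }
have Hball : vnorm (vsub ys yb) < r1.
{ by apply: Rle_lt_trans (vnorm_triang_sub _ y0 _) _; rewrite vnorm_sub_sym; lra. }
exists ys; split => //.
apply: functional_extensionality => i; apply: eq_of_close => eps He.
case: (F_cont ys i Hball (eps / 2)) => [|d [Hd HFc]]; first lra.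
set T := INR m * (2 * KR * r0) + r0 + 1.
have HT : 0 < T.
{ have : 0 <= INR m * (2 * KR * r0) by apply: Rmult_le_pos; nra.
  by rewrite /T; lra. }
case: (half_pow_small (Rmin d (eps / 2) / T)) => [|N HN].
{ by apply: Rdiv_lt_0_compat => //; apply: Rmin_pos; lra. }
have HTN := lt_div_mul _ _ _ HT (HN N (le_n N)).
have HpN := half_pow_pos N.
have Hm1 := Rmin_l d (eps / 2); have Hm2 := Rmin_r d (eps / 2).
have Hpos : 0 <= (/ 2) ^ N * (INR m * (2 * KR * r0)).
{ by apply: Rmult_le_pos; [lra | apply: Rmult_le_pos; nra]. }
have Hpos' : 0 <= r0 * (/ 2) ^ N by apply: Rmult_le_pos; lra.
rewrite /T in HTN.
have H1 := HFc (newton N) ltac:(have := Hfar N; lra).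
have H2 : Rabs (F (newton N) i - c i) < eps / 2.
{ apply: Rle_lt_trans (coord_le_vnorm (vsub (F (newton N)) c) i) _.
  by apply: Rle_lt_trans (newton_invariant N).2 _; lra. }
have := Rabs_triang (F ys i - F (newton N) i) (F (newton N) i - c i).
have -> : F ys i - F (newton N) i + (F (newton N) i - c i) = F ys i - c i by ring.
by rewrite Rabs_minus_sym in H1; lra.
Qed.
End Newton.

Lemma local_solvability {m l} (V : vec m -> Prop) (h : vec m -> vec l)
  (Dh : vec m -> 'I_l -> vec m) (D2h : vec m -> 'I_l -> 'I_m -> vec m) (yb : vec m) :
  is_open V -> V yb -> C2_on V h Dh D2h ->
  (forall u : vec l, exists v : vec m, forall i, mapply (Dh yb) v i = u i) ->
  exists r1 K, 0 < r1 /\ 0 < K /\ (forall y, vnorm (vsub y yb) < r1 -> V y) /\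
    forall y0 c, vnorm (vsub y0 yb) + K * vnorm (vsub (h y0) c) < r1 ->
      exists ys, h ys = c /\ vnorm (vsub ys yb) < r1 /\
                 vnorm (vsub y0 ys) <= K * vnorm (vsub (h y0) c).
Proof.
move=> HVo HVy Hh Hsurj.
case: (HVo yb HVy) => rho0 [Hrho0 HV0].
case: (right_inverse (Dh yb) Hsurj) => Rf [KR [HKR [HRf HRb]]].
have Hcont : forall y i, vnorm (vsub y yb) < rho0 -> cont_at (fun x => h x i) y.
{ by move=> y i Hy; apply: has_grad_cont; apply: ((Hh i).1 y (HV0 y Hy)). }
case: (strict_diff_vec h Dh yb rho0 Hrho0 (fun y i Hy => (Hh i).1 y (HV0 y Hy))
         (fun i c => has_grad_cont _ _ _ ((Hh i).2.1 yb c HVy)) (/ (2 * KR))) => [|r [Hr Hest]].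
{ by apply: Rinv_0_lt_compat; lra. }
have Hr1r := Rmin_l r rho0; have Hr1rho := Rmin_r r rho0.
exists (Rmin r rho0), (2 * (INR m + 1) * KR); split; first exact: Rmin_pos.
split; first by have := pos_INR m; nra.
split; first by move=> y Hy; apply: HV0; lra.
move=> y0 c Hstart.
case: (newton_solution h (Dh yb) Rf KR (Rmin r rho0) yb c y0 HKR HRf HRb)
  => [a b Ha Hb|y i Hy|//|ys [Hys Hd]].
- by apply: Hest; lra.
- by apply: Hcont; lra.
exists ys; split => //; split => //.
by apply: Rle_lt_trans (vnorm_triang_sub _ y0 _) _; rewrite vnorm_sub_sym; lra.
Qed.

Lemma metric_regularity {m l} (Theta : vec m -> Prop) (C : vec l -> Prop) (V : vec m -> Prop)
  (h : vec m -> vec l) (Dh : vec m -> 'I_l -> vec m) (D2h : vec m -> 'I_l -> 'I_m -> vec m)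
  (yb : vec m) :
  is_open V -> V yb -> C2_on V h Dh D2h -> (forall y, V y -> (Theta y <-> C (h y))) ->
  C (h yb) -> (forall u : vec l, exists v : vec m, forall i, mapply (Dh yb) v i = u i) ->
  exists rho K, 0 < rho /\ 0 < K /\ forall y0, vnorm (vsub y0 yb) < rho ->
     setdist Theta y0 <= K * setdist C (h y0).
Proof.
move=> HVo HVy Hh Hred HCy Hsurj.
have HCne : exists c, C c by exists (h yb).
case: (local_solvability V h Dh D2h yb HVo HVy Hh Hsurj) => r1 [K [Hr1 [HK [HV1 Hsolve]]]].
(* Keep [h y0] within [sigma] of [C], so that nearly closest points [c] are admissible. *)
set sigma := r1 / (4 * K + 4).
have Hsig : 0 < sigma by apply: Rdiv_lt_0_compat; lra.
have HsigK : (4 * K + 4) * sigma = r1 by rewrite /sigma; field; lra.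
have Hhc : forall i, cont_at (fun x => h x i) yb.
{ by move=> i; apply: has_grad_cont; apply: ((Hh i).1 yb HVy). }
case: (vec_cont h yb Hhc sigma Hsig) => dh [Hdh Hhb].
exists (Rmin (r1 / 2) dh), K; split; first by apply: Rmin_pos; lra.
split => // y0 /Rmin_Rgt [Hy0a Hy0b].
have Hbs : setdist C (h y0) < sigma by apply: Rle_lt_trans (setdist_le C HCne _ _ HCy) (Hhb _ Hy0b).
apply: Rle_plus_epsilon => eps He.
set e := Rmin (sigma / 2) (eps / K).
have He0 : 0 < e by apply: Rmin_pos; [lra | apply: Rdiv_lt_0_compat].
have HKe : K * e <= eps.
{ have -> : eps = K * (eps / K) by field; lra.
  by apply: Rmult_le_compat_l; [lra | apply: Rmin_r]. }
have He1 : e <= sigma / 2 := Rmin_l _ _.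
case: (setdist_approx C HCne (h y0) e He0) => c [HCc Hc].
case: (Hsolve y0 c) => [|ys [Hys [Hysb Hd]]]; first nra.
have HThys : Theta ys by apply/Hred; [apply: HV1 | rewrite Hys].
apply: Rle_trans (setdist_le Theta (ex_intro _ ys HThys) _ _ HThys) _.
apply: Rle_trans Hd _.
by have := Rmult_le_compat_l K _ _ (Rlt_le _ _ HK) (Rlt_le _ _ Hc); lra.
Qed.

Section Parabola.
Context {n : nat}.
Implicit Types w z : vec n.

Definition parabola (x0 w z : vec n) (t : R) : vec n :=
  vadd x0 (vadd (vscal t w) (vscal (t * t / 2) z)).

(* [r] is [o(t^2)] along some sequence [t -> 0+] on the parabola. *)
Definition small_on_parabola (r : vec n -> R) (x0 w z : vec n) : Prop :=
  forall eps tau, 0 < eps -> 0 < tau ->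
    exists t, 0 < t < tau /\ r (parabola x0 w z t) <= eps * (t * t).

Lemma parabola_dev (x0 w z : vec n) t : 0 < t <= 1 ->
  vnorm (vsub (parabola x0 w z t) x0) <= t * (vnorm w + vnorm z + 1).
Proof.
move=> Ht.
have -> : vsub (parabola x0 w z t) x0 = vadd (vscal t w) (vscal (t * t / 2) z).
{ by apply: functional_extensionality => i; rewrite /parabola /vsub /vadd /vscal; ring. }
apply: Rle_trans (vnorm_triang _ _) _; rewrite !vnorm_scal !Rabs_pos_eq; try nra.
have Hw := vnorm_ge0 w; have Hz := vnorm_ge0 z.
have : t * t / 2 * vnorm z <= t * vnorm z by apply: Rmult_le_compat_r; nra.
nra.
Qed.

Lemma small_on_parabola_le (r1 r2 : vec n -> R) (x0 w z : vec n) :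
  (exists rho K, 0 < rho /\ 0 < K /\ forall x, vnorm (vsub x x0) < rho -> r1 x <= K * r2 x) ->
  small_on_parabola r2 x0 w z -> small_on_parabola r1 x0 w z.
Proof.
move=> [rho [K [Hrho [HK Hb]]]] Hs eps tau He Htau.
set W := vnorm w + vnorm z + 1.
have HW : 0 < W by rewrite /W; have := vnorm_ge0 w; have := vnorm_ge0 z; lra.
case: (Hs (eps / K) (Rmin tau (Rmin 1 (rho / W))))
  => [||t [[Ht0 /Rmin_Rgt [Htau' /Rmin_Rgt [Ht1 Htr]]] Hr]].
- exact: Rdiv_lt_0_compat.
- by repeat apply: Rmin_pos => //; [lra | apply: Rdiv_lt_0_compat].
exists t; split; first lra.
apply: Rle_trans (Hb _ _) _.
- apply: Rle_lt_trans (parabola_dev x0 w z t ltac:(lra)) _.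
  by rewrite -/W; apply: lt_div_mul.
- have := Rmult_le_compat_l K _ _ (Rlt_le _ _ HK) Hr.
  by have -> : K * (eps / K * (t * t)) = eps * (t * t) by field; lra.
Qed.

Definition parabola_model {l} (F : vec n -> vec l) (DF : vec n -> 'I_l -> vec n)
  (D2F : vec n -> 'I_l -> 'I_n -> vec n) (x0 w z : vec n) (t : R) : vec l :=
  vadd (vadd (F x0) (vscal t (mapply (DF x0) w)))
       (vscal (/ 2 * t ^ 2) (vadd (mapply (DF x0) z) (fun j => quad (D2F x0 j) w))).

Lemma parabolic_taylor_vec {l} (F : vec n -> vec l) (DF : vec n -> 'I_l -> vec n)
  (D2F : vec n -> 'I_l -> 'I_n -> vec n) (x0 : vec n) rho w z :
  0 < rho ->
  (forall y j, vnorm (vsub y x0) < rho -> has_grad (fun x => F x j) (DF y j) y) ->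
  (forall j a, has_grad (fun y => DF y j a) (D2F x0 j a) x0) ->
  forall eps, 0 < eps -> exists tau, 0 < tau /\ forall t, 0 < t < tau ->
    vnorm (vsub (F (parabola x0 w z t)) (parabola_model F DF D2F x0 w z t)) <= eps * (t * t).
Proof.
move=> Hrho HF HD2 eps He.
set W := vnorm w + vnorm z + 1.
have Hw0 := vnorm_ge0 w; have Hz0 := vnorm_ge0 z.
have HW : 1 <= W by rewrite /W; lra.
set e' := eps / (INR l + 1).
case: (common_radius l (fun j tj => forall t u, 0 < t < tj -> vnorm u <= t * t * W ->
    Rabs (F (vadd x0 (vadd (vscal t w) u)) j - F x0 j - t * dot (DF x0 j) w - dot (DF x0 j) u
          - / 2 * (t * t) * quad (D2F x0 j) w) <= e' * (t * t))).
- by move=> j d d' Hd P t u Ht Hu; apply: P => //; lra.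
- move=> j; exact: (parabolic_taylor (fun x => F x j) (fun x => DF x j) (D2F x0 j) x0 rho w W
                     Hrho (fun y Hy => HF y j Hy) (HD2 j) HW ltac:(rewrite /W; lra) e'
                     (card_share_pos l _ He)).
move=> tau [Htau HT]; exists tau; split => // t Ht.
have Htt : t ^ 2 = t * t by rewrite /=; ring.
apply: Rle_trans (vnorm_le_coord_bound _ (e' * (t * t)) _) _.
- move=> j.
  have Hu : vnorm (vscal (t * t / 2) z) <= t * t * W.
  { by rewrite vnorm_scal Rabs_pos_eq /W; nra. }
  have -> : vsub (F (parabola x0 w z t)) (parabola_model F DF D2F x0 w z t) j
    = F (vadd x0 (vadd (vscal t w) (vscal (t * t / 2) z))) j - F x0 j - t * dot (DF x0 j) w
      - dot (DF x0 j) (vscal (t * t / 2) z) - / 2 * (t * t) * quad (D2F x0 j) w.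
  { by rewrite dot_scalr /parabola_model /parabola /vsub /vadd /vscal /mapply Htt; lra. }
  exact: HT.
- have := card_share_lt l eps He; rewrite -/e' => Hl.
  by rewrite -Rmult_assoc; apply: Rmult_le_compat_r; nra.
Qed.

Lemma outer_tangent_small {l} (F : vec n -> vec l) (DF : vec n -> 'I_l -> vec n)
  (D2F : vec n -> 'I_l -> 'I_n -> vec n) (x0 : vec n) rho (C : vec l -> Prop) w z :
  0 < rho ->
  (forall y j, vnorm (vsub y x0) < rho -> has_grad (fun x => F x j) (DF y j) y) ->
  (forall j a, has_grad (fun y => DF y j a) (D2F x0 j a) x0) ->
  (exists c, C c) ->
  outer_second_tangent C (F x0) (mapply (DF x0) w)
    (vadd (mapply (DF x0) z) (fun j => quad (D2F x0 j) w)) ->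
  small_on_parabola (fun x => setdist C (F x)) x0 w z.
Proof.
move=> Hrho HF HD2 HCne [tk [Htk [Htk0 Hratio]]] eps tau He Htau.
have He2 : 0 < eps / 2 by lra.
case: (parabolic_taylor_vec F DF D2F x0 rho w z Hrho HF HD2 (eps / 2) He2) => tq [Htq HT].
case: (Hratio (eps / 2) He2) => N1 HN1.
case: (Htk0 (Rmin tau tq)) => [|N2 HN2]; first exact: Rmin_pos.
set k := Nat.max N1 N2.
have := HN1 k ltac:(lia); have := HN2 k ltac:(lia); rewrite /Rdist !Rminus_0_r.
set t := tk k; have Ht0 : 0 < t := Htk k.
rewrite (Rabs_pos_eq t); last lra; move=> /Rmin_Rgt [Httau Httq] Hrat.
exists t; split; first lra.
have HdP : setdist C (parabola_model F DF D2F x0 w z t) <= eps / 2 * (t * t).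
{ move: Hrat => /Rabs_def2 [Hlt _].
  have Htt : t ^ 2 = t * t by rewrite /=; ring.
  have := div_lt_mul _ _ (t ^ 2) ltac:(rewrite Htt; nra) Hlt.
  by rewrite /parabola_model -Htt; lra. }
apply: Rle_trans (setdist_lip C HCne _ (parabola_model F DF D2F x0 w z t)) _.
by have := HT t ltac:(lra); lra.
Qed.

Lemma small_parabola_witness (S : vec n -> Prop) (x0 w z : vec n) :
  (exists y, S y) -> small_on_parabola (setdist S) x0 w z ->
  forall eps tau, 0 < eps -> 0 < tau -> exists t x', 0 < t < tau /\ S x' /\
    vnorm (vsub x' (parabola x0 w z t)) < eps * (t * t).
Proof.
move=> HSne Hsmall eps tau He Htau.
case: (Hsmall (eps / 2) tau) => [||t [Ht Hd]] //; first lra.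
case: (setdist_approx S HSne (parabola x0 w z t) (eps / 2 * (t * t))) => [|x' [Hx' Hx'd]].
{ by apply: Rmult_lt_0_compat; nra. }
by exists t, x'; split => //; split => //; rewrite vnorm_sub_sym; lra.
Qed.

Lemma taylor_near_parabola (g : vec n -> R) (Dg : vec n -> vec n) (D2g : vec n -> 'I_n -> vec n)
  (x0 : vec n) rho w z :
  0 < rho ->
  (forall y, vnorm (vsub y x0) < rho -> has_grad g (Dg y) y) ->
  (forall a, has_grad (fun y => Dg y a) (D2g x0 a) x0) ->
  dot (Dg x0) w = 0 ->
  forall eps, 0 < eps -> exists tau delta, 0 < tau /\ 0 < delta /\ forall t x',
    0 < t < tau -> vnorm (vsub x' (parabola x0 w z t)) <= delta * (t * t) ->
    g x' - g x0 <= t * t / 2 * (dot (Dg x0) z + quad (D2g x0) w) + eps * (t * t).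
Proof.
move=> Hrho Hg HH Hgw eps He.
set W := vnorm w + vnorm z + 1.
have Hw0 := vnorm_ge0 w; have Hz0 := vnorm_ge0 z.
have HW : 1 <= W by rewrite /W; lra.
set G := vnorm (Dg x0); have HG : 0 <= G by apply: vnorm_ge0.
case: (parabolic_taylor g Dg (D2g x0) x0 rho w W Hrho Hg HH HW ltac:(rewrite /W; lra) (eps / 2))
  => [|tau [Htau HT]]; first lra.
set delta := Rmin (/ 2) (eps / (2 * (G + 1))).
have Hd : 0 < delta by apply: Rmin_pos; [lra | apply: Rdiv_lt_0_compat; lra].
have HGd : G * delta <= eps / 2.
{ have : delta * (2 * (G + 1)) <= eps.
  { have -> : eps = eps / (2 * (G + 1)) * (2 * (G + 1)) by field; lra.
    by apply: Rmult_le_compat_r; [lra | apply: Rmin_r]. }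
  nra. }
exists tau, delta; split => //; split => // t x' Ht Hx'.
set e := vsub x' (parabola x0 w z t) in Hx' *.
set u := vadd (vscal (t * t / 2) z) e.
have Ex' : x' = vadd x0 (vadd (vscal t w) u).
{ by apply: functional_extensionality => i; rewrite /u /e /parabola /vadd /vsub /vscal; ring. }
have Hu : vnorm u <= t * t * W.
{ apply: Rle_trans (vnorm_triang _ _) _; rewrite vnorm_scal Rabs_pos_eq; last nra.
  have Hdt : delta * (t * t) <= / 2 * (t * t).
  { by apply: Rmult_le_compat_r; [nra | apply: Rmin_l]. }
  have Htw : 0 <= t * t * vnorm w by nra.
  have Htz : 0 <= t * t * vnorm z by nra.
  by rewrite /W; nra. }
have := HT t u Ht Hu; rewrite -Ex' Hgw /u dot_addr dot_scalr => /(Rle_trans _ _ _ (Rle_abs _)) HTx.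
have Hde : dot (Dg x0) e <= eps / 2 * (t * t).
{ apply: Rle_trans (Rle_abs _) _; apply: Rle_trans (cauchy_schwarz _ _) _.
  by have := Rmult_le_compat_l G _ _ HG Hx'; rewrite -/G -/e; nra. }
lra.
Qed.

Lemma second_order_condition (g : vec n -> R) (Dg : vec n -> vec n) (D2g : vec n -> 'I_n -> vec n)
  (S : vec n -> Prop) (x0 : vec n) rho w z :
  0 < rho ->
  (forall y, vnorm (vsub y x0) < rho -> has_grad g (Dg y) y) ->
  (forall a, has_grad (fun y => Dg y a) (D2g x0 a) x0) ->
  S x0 ->
  (exists eps, 0 < eps /\ forall x, S x -> vnorm (vsub x x0) < eps -> g x0 <= g x) ->
  dot (Dg x0) w = 0 ->
  small_on_parabola (setdist S) x0 w z ->
  0 <= dot (Dg x0) z + quad (D2g x0) w.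
Proof.
move=> Hrho Hg HH HS [em [Hem Hmin]] Hgw Hsmall.
apply: Rnot_lt_le => HL.
set L := dot (Dg x0) z + quad (D2g x0) w in HL *.
case: (taylor_near_parabola g Dg D2g x0 rho w z Hrho Hg HH Hgw (- L / 4))
  => [|tau [delta [Htau [Hdelta HT]]]]; first lra.
set W := vnorm w + vnorm z + 1.
have HW : 1 <= W by rewrite /W; have := vnorm_ge0 w; have := vnorm_ge0 z; lra.
case: (small_parabola_witness S x0 w z (ex_intro _ x0 HS) Hsmall (Rmin 1 delta)
         (Rmin tau (Rmin 1 (em / (2 * W)))))
  => [||t [x' [[Ht0 /Rmin_Rgt [Httau /Rmin_Rgt [Ht1 Htm]]] [Hx' Hx'd]]]].
- by apply: Rmin_pos; lra.
- by repeat apply: Rmin_pos => //; [lra | apply: Rdiv_lt_0_compat; lra].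
have Htt : 0 < t * t by nra.
have Hnear : vnorm (vsub x' (parabola x0 w z t)) <= t * W.
{ by have := Rmult_le_compat_r (t * t) _ _ (Rlt_le _ _ Htt) (Rmin_l 1 delta); nra. }
have Hloc : vnorm (vsub x' x0) < em.
{ apply: Rle_lt_trans (vnorm_triang_sub _ (parabola x0 w z t) _) _.
  have := parabola_dev x0 w z t ltac:(lra); rewrite -/W => Hp.
  have := lt_div_mul _ _ (2 * W) ltac:(lra) Htm; lra. }
have := HT t x' ltac:(lra) ltac:(have := Rmin_r 1 delta; nra); rewrite -/L => Hgx.
have Hge := Hmin x' Hx' Hloc.
have : L * (t * t) < 0 by nra.
lra.
Qed.
End Parabola.

Lemma composite_error_bound {n m l} (q : vec n -> vec m) (h : vec m -> vec l)
  (Theta : vec m -> Prop) (C : vec l -> Prop) (x0 : vec n) :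
  (forall i, cont_at (fun x => q x i) x0) ->
  (exists rho K, 0 < rho /\ 0 < K /\ forall y, vnorm (vsub y (q x0)) < rho ->
     setdist Theta y <= K * setdist C (h y)) ->
  (exists kappa U, 0 < kappa /\ nbhd x0 U /\
     forall x, U x -> setdist (fun x' => Theta (q x')) x <= kappa * setdist Theta (q x)) ->
  exists rho K, 0 < rho /\ 0 < K /\ forall x, vnorm (vsub x x0) < rho ->
     setdist (fun x' => Theta (q x')) x <= K * setdist C (h (q x)).
Proof.
move=> Hqc [rhoT [KT [HrhoT [HKT HT]]]] [kappa [U [Hkappa [[eU [HeU HU]] Hms]]]].
case: (vec_cont q x0 Hqc rhoT HrhoT) => dq [Hdq Hq].
exists (Rmin dq eU), (kappa * KT); split; first exact: Rmin_pos.
split; first exact: Rmult_lt_0_compat.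
move=> x /Rmin_Rgt [Hx1 Hx2].
apply: Rle_trans (Hms x (HU x Hx2)) _; rewrite Rmult_assoc.
by apply: Rmult_le_compat_l; [lra | apply: HT; apply: Hq].
Qed.

(* Lemma 4.4.  Only the reduction, surjectivity of [h'(q xbar)], C^2 smoothness, local
   minimality, MSCQ and [g'(xbar) w = 0] are needed. *)
Theorem lemma4p4
  (n m l : nat)
  (g : vec n -> R) (Dg : vec n -> vec n) (D2g : vec n -> 'I_n -> vec n)
  (q : vec n -> vec m) (Dq : vec n -> 'I_m -> vec n) (D2q : vec n -> 'I_m -> 'I_n -> vec n)
  (Theta : vec m -> Prop) (C : vec l -> Prop) (V : vec m -> Prop)
  (h : vec m -> vec l) (Dh : vec m -> 'I_l -> vec m) (D2h : vec m -> 'I_l -> 'I_m -> vec m)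
  (DQ : vec n -> 'I_l -> vec n) (D2Q : vec n -> 'I_l -> 'I_n -> vec n)
  (xbar : vec n)
  (* standing assumptions *)
  (Hg : C2_scalar_on (fun _ => True) g Dg D2g)
  (Hq : C2_on (fun _ => True) q Dq D2q)
  (HTheta_ne : exists y, Theta y)
  (HTheta_cl : is_closed Theta)
  (HTheta_cv : is_convex Theta)
  (HC_cl : is_closed C) (HC_cv : is_convex C) (HC_cone : is_cone C) (HC_pt : is_pointed C)
  (HV_open : is_open V) (HV_ybar : V (q xbar))
  (Hh : C2_on V h Dh D2h)
  (Hh0 : forall i, h (q xbar) i = 0)
  (Hh_surj : forall u : vec l, exists v : vec m, forall i, mapply (Dh (q xbar)) v i = u i)
  (Hred : forall y, V y -> (Theta y <-> C (h y)))
  (* Q := h o q on q^{-1}(V), with gradient DQ and Hessians D2Q *)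
  (HQ : C2_on (fun x => V (q x)) (fun x => h (q x)) DQ D2Q)
  (* xbar is a local minimizer of (P) *)
  (Hfeas : Theta (q xbar))
  (Hmin : exists eps, 0 < eps /\
     forall x, Theta (q x) -> vnorm (vsub x xbar) < eps -> g xbar <= g x)
  (* MSCQ at xbar *)
  (Hmscq : exists kappa U, 0 < kappa /\ nbhd xbar U /\
     forall x, U x -> setdist (fun x' => Theta (q x')) x <= kappa * setdist Theta (q x)) :
  forall (w z : vec n),
    contingent_cone (fun x => Theta (q x)) xbar w ->
    dot (Dg xbar) w = 0 ->
    outer_second_tangent C (h (q xbar)) (mapply (DQ xbar) w)
      (vadd (mapply (DQ xbar) z) (fun j => quad (D2Q xbar j) w)) ->
    dot (Dg xbar) z + quad (D2g xbar) w >= 0.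
Proof.
move=> w z _ Hgw HT2.
have HCyb : C (h (q xbar)) by apply/Hred.
have Hqc : forall i, cont_at (fun x => q x i) xbar.
{ by move=> i; apply: has_grad_cont; apply: ((Hq i).1 xbar I). }
(* Q = h o q is C^2 on a ball around xbar, namely on the preimage of V. *)
case: (HV_open _ HV_ybar) => rhoV [HrhoV HV].
case: (vec_cont q xbar Hqc rhoV HrhoV) => dq [Hdq HqV].
have HsmallC : small_on_parabola (fun x => setdist C (h (q x))) xbar w z.
{ apply: (outer_tangent_small (fun x => h (q x)) DQ D2Q xbar dq) => //.
  - by move=> y j Hy; apply: (HQ j).1; apply: HV; apply: HqV.
  - by move=> j a; apply: (HQ j).2.1.
  - by exists (h (q xbar)). }
(* Step 2: MSCQ and metric regularity of the reduction give d(x; Gamma) <= K d(Q x; C). *)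
have Hbound := composite_error_bound q h Theta C xbar Hqc
  (metric_regularity Theta C V h Dh D2h (q xbar) HV_open HV_ybar Hh Hred HCyb Hh_surj) Hmscq.
(* Step 3: the parabola is o(t^2)-close to Gamma, so minimality yields the inequality. *)
apply: Rle_ge.
apply: (second_order_condition g Dg D2g (fun x => Theta (q x)) xbar 1 w z Rlt_0_1) => //.
- by move=> y _; apply: Hg.1.
- by move=> a; apply: Hg.2.1.
- exact: small_on_parabola_le Hbound HsmallC.
Qed.
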